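(* For an integer $j\ge1$ and $r\in(0,1)$, let $$B_j(r)=-1-2r+2jr-r^2-\frac{(1-r)^j}{(1+r)^{j-2}}.$$ For every integer $k>2$ the following hold. 1. There exists a unique $r(k)\in(0,1)$ with $B_k(r(k))=0$. Equivalently, $r(k)$ is the unique point in $(0,1)$ at which $K_k(r)=-\frac{1-r}{8(1+r)^2}B_k(r)$ vanishes. 2. $r(k)$ is a simple root, i.e. $B_k'(r(k))\neq0$. 3. $B_j(r(k))\neq0$ for every integer $j\ge1$ with $j\neq k$. Moreover, the coefficient $y_1=-\frac{3r+1}{4(1+r)^2}$ is nonzero. 4. If $k_1>k_2>2$, then $r(k_1)<r(k_2)$. *)

From Stdlib Require Import Reals Lra ZArith.
Open Scope R_scope.

(* B_j(r) = -1 - 2r + 2jr - r^2 - (1-r)^j / (1+r)^(j-2),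
   the exponent j-2 is an integer (it is -1 when j = 1). *)
Definition B (j : nat) (r : R) : R :=
  -1 - 2 * r + 2 * INR j * r - r ^ 2
  - (1 - r) ^ j / powerRZ (1 + r) (Z.of_nat j - 2).

Definition K (k : nat) (r : R) : R :=
  - ((1 - r) / (8 * (1 + r) ^ 2)) * B k r.

Definition y1 (r : R) : R := - ((3 * r + 1) / (4 * (1 + r) ^ 2)).

(* Substituting t = (1-r)/(1+r), a decreasing involution of (0,1), turns B_j into
   (1+r)^2 F_j(t) with F_j(t) = j(1-t^2)/2 - 1 - t^j.  On [0,1) the polynomial F_j
   is strictly decreasing in t and strictly increasing in j, and F_k(0) > 0 > F_k(1)
   for k > 2.  This gives existence (intermediate values) and uniqueness of the root,
   rules out a common root of B_j and B_k, and makes the roots decrease in k.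
   Simplicity is independent of all this: B_k' > 0 on (-1,1) as soon as k >= 2. *)

From Stdlib Require Import Reals ZArith Lra Lia.
From Coquelicot Require Import Coquelicot.
Open Scope R_scope.

Definition cayley (r : R) : R := (1 - r) / (1 + r).

Lemma cayleyK r : -1 < r -> cayley (cayley r) = r.
Proof. intros Hr; unfold cayley; field; lra. Qed.

Lemma cayley_in01 r : 0 < r < 1 -> 0 < cayley r < 1.
Proof.
  intros Hr; unfold cayley.
  split; [apply Rdiv_lt_0_compat; lra|].
  apply (Rmult_lt_reg_r (1 + r)); [lra|].
  unfold Rdiv; rewrite Rmult_assoc, Rinv_l; lra.
Qed.

Lemma cayley_lt r1 r2 : -1 < r1 -> r1 < r2 -> cayley r2 < cayley r1.
Proof.
  intros H1 H12; unfold cayley.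
  replace ((1 - r1) / (1 + r1)) with (2 * / (1 + r1) - 1) by (field; lra).
  replace ((1 - r2) / (1 + r2)) with (2 * / (1 + r2) - 1) by (field; lra).
  assert (/ (1 + r2) < / (1 + r1)) by (apply Rinv_lt_contravar; nra).
  lra.
Qed.

Definition F (j : nat) (t : R) : R := INR j * (1 - t ^ 2) / 2 - 1 - t ^ j.

Lemma F_decreasing j s t : (1 <= j)%nat -> 0 <= s -> s < t -> F j t < F j s.
Proof.
  intros Hj Hs Hst; unfold F.
  assert (1 <= INR j) by (apply (le_INR 1); lia).
  assert (s ^ j <= t ^ j) by (apply pow_incr; lra).
  assert (0 < INR j * (t ^ 2 - s ^ 2)) by (apply Rmult_lt_0_compat; simpl; nra).
  lra.
Qed.

Lemma F_lt_inv j s t : (1 <= j)%nat -> 0 <= s -> 0 <= t -> F j t < F j s -> s < t.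
Proof.
  intros Hj Hs Ht HF.
  destruct (Rlt_le_dec s t) as [|Hts]; [assumption|].
  destruct (Rle_lt_or_eq_dec _ _ Hts) as [Hlt|<-]; [|lra].
  pose proof (F_decreasing j t s Hj Ht Hlt); lra.
Qed.

Lemma F_inj j s t : (1 <= j)%nat -> 0 <= s -> 0 <= t -> F j s = F j t -> s = t.
Proof.
  intros Hj Hs Ht HF.
  destruct (Rtotal_order s t) as [Hlt|[|Hlt]]; [|assumption|].
  - pose proof (F_decreasing j s t Hj Hs Hlt); lra.
  - pose proof (F_decreasing j t s Hj Ht Hlt); lra.
Qed.

Lemma F_lt_index j k t : (j < k)%nat -> 0 <= t < 1 -> F j t < F k t.
Proof.
  intros Hjk Ht.
  assert (step : forall i, F i t < F (S i) t).
  { intro i; unfold F; rewrite S_INR; simpl (t ^ S i).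
    assert (0 <= t ^ i) by (apply pow_le; lra).
    nra. }
  induction Hjk as [|k _ IH]; [apply step|].
  exact (Rlt_trans _ _ _ IH (step k)).
Qed.

Lemma F_root_exists k : (2 < k)%nat -> exists t, 0 < t < 1 /\ F k t = 0.
Proof.
  intros Hk.
  assert (3 <= INR k) by (replace 3 with (INR 3) by (simpl; ring); apply le_INR; lia).
  assert (Hc : continuity (fun t => - F k t)) by (unfold F; reg).
  assert (H0 : - F k 0 < 0) by (unfold F; rewrite !pow_i by lia; lra).
  assert (H1 : 0 < - F k 1) by (unfold F; rewrite !pow1; lra).
  destruct (IVT _ 0 1 Hc Rlt_0_1 H0 H1) as [t [Ht Hroot]].
  assert (t <> 0) by (intros ->; lra).
  assert (t <> 1) by (intros ->; lra).
  exists t; split; lra.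
Qed.

Lemma B_cayley j r : -1 < r -> B j r = (1 + r) ^ 2 * F j (cayley r).
Proof.
  intros Hr; unfold B, F, cayley.
  assert (1 + r <> 0) by lra.
  assert ((1 + r) ^ j <> 0) by (apply pow_nonzero; assumption).
  replace (Z.of_nat j - 2)%Z with (Z.of_nat j + (-2))%Z by lia.
  rewrite powerRZ_add by assumption; rewrite <- pow_powerRZ; simpl (powerRZ _ (-2)).
  unfold Rdiv; rewrite !Rpow_mult_distr, !pow_inv.
  field; auto.
Qed.

Lemma B_eq0 j r : -1 < r -> B j r = 0 <-> F j (cayley r) = 0.
Proof.
  intros Hr; rewrite B_cayley by assumption.
  assert (0 < (1 + r) ^ 2) by (apply pow_lt; lra).
  split; [intros Hp; destruct (Rmult_integral _ _ Hp)|intros ->]; lra.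
Qed.

Lemma B_root_exists k : (2 < k)%nat -> exists r, 0 < r < 1 /\ B k r = 0.
Proof.
  intros Hk; destruct (F_root_exists k Hk) as [t [Ht Hroot]].
  exists (cayley t); split; [now apply cayley_in01|].
  pose proof (cayley_in01 t Ht).
  apply B_eq0; [lra|].
  now rewrite cayleyK by lra.
Qed.

Lemma B_root_unique k r s :
  (1 <= k)%nat -> 0 < r < 1 -> 0 < s < 1 -> B k r = 0 -> B k s = 0 -> r = s.
Proof.
  intros Hk Hr Hs HBr HBs.
  apply B_eq0 in HBr, HBs; try lra.
  pose proof (cayley_in01 r Hr); pose proof (cayley_in01 s Hs).
  rewrite <- (cayleyK r), <- (cayleyK s) by lra.
  f_equal; apply (F_inj k); [assumption|lra..].
Qed.

Lemma B_root_index_unique j k r :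
  (1 <= j)%nat -> j <> k -> 0 < r < 1 -> B k r = 0 -> B j r <> 0.
Proof.
  intros Hj Hjk Hr HBk HBj.
  apply B_eq0 in HBk, HBj; try lra.
  pose proof (cayley_in01 r Hr).
  destruct (Nat.lt_total j k) as [Hlt|[|Hlt]]; [|contradiction|].
  - pose proof (F_lt_index j k (cayley r) Hlt ltac:(lra)); lra.
  - pose proof (F_lt_index k j (cayley r) Hlt ltac:(lra)); lra.
Qed.

(* Larger k means a larger F_k, hence a root further right in t, hence further left in r. *)
Lemma B_roots_decreasing k1 k2 r1 r2 :
  (1 <= k2)%nat -> (k2 < k1)%nat -> 0 < r1 < 1 -> 0 < r2 < 1 ->
  B k1 r1 = 0 -> B k2 r2 = 0 -> r1 < r2.
Proof.
  intros Hk2 Hk12 Hr1 Hr2 HB1 HB2.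
  apply B_eq0 in HB1, HB2; try lra.
  pose proof (cayley_in01 r1 Hr1); pose proof (cayley_in01 r2 Hr2).
  pose proof (F_lt_index k2 k1 (cayley r2) Hk12 ltac:(lra)).
  assert (Ht : cayley r2 < cayley r1) by (apply (F_lt_inv k1); lia || lra).
  destruct (Rlt_le_dec r1 r2) as [|Hle]; [assumption|].
  destruct (Rle_lt_or_eq_dec _ _ Hle) as [Hlt| ->]; [|lra].
  pose proof (cayley_lt r2 r1 ltac:(lra) Hlt); lra.
Qed.

Lemma B_pow k r : (2 <= k)%nat ->
  B k r = -1 - 2 * r + 2 * INR k * r - r ^ 2 - (1 - r) ^ k / (1 + r) ^ (k - 2).
Proof.
  intros Hk; unfold B.
  replace (Z.of_nat k - 2)%Z with (Z.of_nat (k - 2)) by lia.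
  now rewrite <- pow_powerRZ.
Qed.

(* Both terms coming from (1-r)^k/(1+r)^(k-2) contribute nonnegatively to B_k'. *)
Lemma B_derivative_pos k r : (2 <= k)%nat -> -1 < r < 1 ->
  exists l, derivable_pt_lim (B k) r l /\ 0 < l.
Proof.
  intros Hk Hr.
  destruct k as [|[|m]]; [lia|lia|].
  replace (S (S m)) with (m + 2)%nat by lia.
  eexists; split.
  - eapply derivable_pt_lim_ext; [intro z; symmetry; apply B_pow; lia|].
    replace (m + 2 - 2)%nat with m by lia.
    apply is_derive_Reals; auto_derive; [apply pow_nonzero; lra|reflexivity].
  - assert (2 <= INR (m + 2)) by (replace 2 with (INR 2) by (simpl; ring); apply le_INR; lia).
    assert (0 <= INR m) by apply pos_INR.
    assert (0 < (1 + - r) ^ Init.Nat.pred (m + 2)) by (apply pow_lt; lra).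
    assert (0 < (1 + - r) ^ (m + 2)) by (apply pow_lt; lra).
    assert (0 < (1 + r) ^ m) by (apply pow_lt; lra).
    assert (0 < (1 + r) ^ Init.Nat.pred m) by (apply pow_lt; lra).
    assert (0 <= INR (m + 2) * (1 + - r) ^ Init.Nat.pred (m + 2) * / (1 + r) ^ m).
    { apply Rmult_le_pos; [apply Rmult_le_pos|apply Rlt_le, Rinv_0_lt_compat]; lra. }
    assert (0 <= (1 + - r) ^ (m + 2) * (INR m * (1 + r) ^ Init.Nat.pred m)
                 * / ((1 + r) ^ m * (1 + r) ^ m)).
    { apply Rmult_le_pos; [|apply Rlt_le, Rinv_0_lt_compat; nra].
      apply Rmult_le_pos; [lra|apply Rmult_le_pos; lra]. }
    nra.
Qed.

Lemma K_eq0 k r : 0 < r < 1 -> K k r = 0 <-> B k r = 0.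
Proof.
  intros Hr; unfold K.
  assert (0 < (1 - r) / (8 * (1 + r) ^ 2)).
  { apply Rdiv_lt_0_compat; [lra|]. assert (0 < (1 + r) ^ 2) by (apply pow_lt; lra). lra. }
  split; [intros Hp; destruct (Rmult_integral _ _ Hp)|intros ->]; lra.
Qed.

Lemma y1_neq0 r : 0 <= r -> y1 r <> 0.
Proof.
  intros Hr; unfold y1.
  assert (0 < (3 * r + 1) / (4 * (1 + r) ^ 2)).
  { apply Rdiv_lt_0_compat; [lra|]. assert (0 < (1 + r) ^ 2) by (apply pow_lt; lra). lra. }
  lra.
Qed.

Theorem mainTheorem6 :
  (forall k : nat, (2 < k)%nat ->
     exists rk : R,
       (0 < rk < 1 /\ B k rk = 0) /\
       (* uniqueness of the root of B_k in (0,1) *)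
       (forall r, 0 < r < 1 -> B k r = 0 -> r = rk) /\
       (* equivalently rk is the unique zero of K_k in (0,1) *)
       (forall r, 0 < r < 1 -> (K k r = 0 <-> r = rk)) /\
       (* simple root *)
       (exists l : R, derivable_pt_lim (B k) rk l /\ l <> 0) /\
       (* B_j (rk) <> 0 for j >= 1, j <> k *)
       (forall j : nat, (1 <= j)%nat -> j <> k -> B j rk <> 0) /\
       y1 rk <> 0) /\
  (* monotonicity: k1 > k2 > 2 implies r(k1) < r(k2) *)
  (forall (k1 k2 : nat) (r1 r2 : R), (2 < k2)%nat -> (k2 < k1)%nat ->
     0 < r1 < 1 -> B k1 r1 = 0 -> 0 < r2 < 1 -> B k2 r2 = 0 -> r1 < r2).
Proof.
  split.
  - intros k Hk.
    destruct (B_root_exists k Hk) as [rk [Hrk HBk]].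
    assert (Hunique : forall r, 0 < r < 1 -> B k r = 0 -> r = rk)
      by (intros r Hr HBr; apply (B_root_unique k); lia || assumption).
    exists rk; split; [split; assumption|].
    split; [exact Hunique|].
    split; [|split; [|split]].
    + intros r Hr; rewrite K_eq0 by assumption.
      split; [now apply Hunique|now intros ->].
    + destruct (B_derivative_pos k rk ltac:(lia) ltac:(lra)) as [l [Hl Hpos]].
      exists l; split; [exact Hl|lra].
    + intros j Hj Hjk; now apply (B_root_index_unique j k).
    + apply y1_neq0; lra.
  - intros k1 k2 r1 r2 Hk2 Hk12 Hr1 HB1 Hr2 HB2.
    apply (B_roots_decreasing k1 k2); lia || assumption.
Qed.
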